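(* For every integer $k\ge 2$, the complete $k$-partite graph $K(2,2,\ldots,2)$ (with $k$ parts, each of size $2$) has Hall number $h(K(2,\ldots,2))=k$.
   Context: All graphs are finite and simple. A list assignment $L$ to a graph $G$ assigns a finite set $L(v)$ to each vertex $v$; a proper $L$-coloring is a map $\psi$ with $\psi(v)\in L(v)$ for all $v$ and $\psi(u)\ne\psi(v)$ for every edge $uv$. For a subgraph $H$ of $G$ and a color $\sigma$, let $H_\sigma$ denote the subgraph of $H$ induced by $\{v\in V(H):\sigma\in L(v)\}$, and let $\alpha$ denote the independence number (with $\alpha$ of the null graph equal to $0$). $G$ and $L$ satisfy Hall's condition if $\sum_{\sigma}\alpha(H_\sigma)\ge |V(H)|$ for every subgraph $H$ of $G$, the sum being over all colors. The Hall number $h(G)$ is the smallest positive integer $k$ such that $G$ has a proper $L$-coloring whenever $G$ and $L$ satisfy Hall's condition and $|L(v)|\ge k$ for every $v\in V(G)$. *)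

From mathcomp Require Import all_boot.
Set Implicit Arguments. Unset Strict Implicit. Unset Printing Implicit Defensive.

Definition simple_graph (V : finType) (e : rel V) : Prop :=
  irreflexive e /\ symmetric e.

Definition is_subgraph (V : finType) (e : rel V) (W : {set V}) (E : rel V) : Prop :=
  symmetric E /\ (forall u v, E u v -> [&& u \in W, v \in W & e u v]).

Definition independent_in (V : finType) (W : {set V}) (E : rel V) (S : {set V}) : bool :=
  (S \subset W) && [forall u in S, forall v in S, ~~ E u v].

Definition alpha (V : finType) (W : {set V}) (E : rel V) : nat :=
  \max_(S : {set V} | independent_in W E S) #|S|.

Definition restrict_color (V C : finType) (L : V -> {set C}) (W : {set V}) (c : C)
  : {set V} := [set v in W | c \in L v].

Definition alpha_color (V C : finType) (L : V -> {set C}) (W : {set V}) (E : rel V)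
  (c : C) : nat :=
  let Wc := restrict_color L W c in
  alpha Wc [rel u v | [&& u \in Wc, v \in Wc & E u v]].

Definition hall_condition (V C : finType) (e : rel V) (L : V -> {set C}) : Prop :=
  forall (W : {set V}) (E : rel V), is_subgraph e W E ->
    \sum_(c : C) alpha_color L W E c >= #|W|.

Definition proper_L_coloring (V C : finType) (e : rel V) (L : V -> {set C})
  (f : V -> C) : Prop :=
  (forall v, f v \in L v) /\ (forall u v, e u v -> f u != f v).

Definition L_colorable (V C : finType) (e : rel V) (L : V -> {set C}) : Prop :=
  exists f : V -> C, proper_L_coloring e L f.

Definition hall_property (V : finType) (e : rel V) (k : nat) : Prop :=
  forall (C : finType) (L : V -> {set C}),
    hall_condition e L -> (forall v, k <= #|L v|) -> L_colorable e L.

Definition hall_number_is (V : finType) (e : rel V) (k : nat) : Prop :=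
  0 < k /\ hall_property e k /\ (forall j, 0 < j -> hall_property e j -> k <= j).

(* The complete k-partite graph K(2,...,2): vertices (part i, copy b),
   adjacent iff in different parts. *)
Definition K2_vertex (k : nat) : finType := ('I_k * bool)%type.
Definition K2_adj (k : nat) : rel (K2_vertex k) := fun u v => u.1 != v.1.
Arguments K2_adj k : clear implicits.
Arguments K2_vertex k : clear implicits.

From mathcomp Require Import all_boot zify.
Set Implicit Arguments. Unset Strict Implicit. Unset Printing Implicit Defensive.

(* If both vertices of some part share a colour c, give them c,
   delete c from the other lists and recurse on the remaining k - 1 parts.
   Otherwise the two lists of every part are disjoint, so any set of vertices
   either meets each part at most once (and sees a list of size >= k) or
   contains a whole part (and sees >= 2k colours); Hall's marriage theorem then
   yields pairwise distinct colours.
   Lower bound: for k = n + 2 there are lists of size n + 1 that satisfy Hall's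
   condition but admit no proper colouring. *)

Section HallMarriage.
Variables (T C : finType).
Implicit Types (X Y Z : {set T}) (L : T -> {set C}) (f : T -> C).

Definition marriage_cond X L :=
  forall Y, Y \subset X -> #|Y| <= #|\bigcup_(v in Y) L v|.

Definition distinct_reps X L f :=
  (forall v, v \in X -> f v \in L v) /\ {in X &, injective f}.

Lemma bigcup_setDl Z L (N : {set C}) :
  \bigcup_(v in Z) (L v :\: N) = (\bigcup_(v in Z) L v) :\: N.
Proof.
by rewrite (big_morph (fun A : {set C} => A :\: N) (fun A B => setDUl A B N) (set0D N)).
Qed.

Lemma distinct_reps_glue X Y L (N : {set C}) f1 f2 :
    distinct_reps Y L f1 -> f1 @: Y \subset N ->
    distinct_reps (X :\: Y) (fun v => L v :\: N) f2 ->
  distinct_reps X L (fun v => if v \in Y then f1 v else f2 v).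
Proof.
move=> [f1L f1i] f1N [f2L f2i].
have f2N v : v \in X -> v \notin Y -> f2 v \in L v /\ f2 v \notin N.
  by move=> vX vY; apply/setDP/f2L; rewrite inE vY vX.
have f1Y v : v \in Y -> f1 v \in N by move=> vY; apply: (subsetP f1N); apply: imset_f.
split=> [v vX | u v uX vX /=].
  by case: ifP => vY; [apply: f1L | case: (f2N v vX (negbT vY))].
case: ifP => uY; case: ifP => vY.
- exact: f1i.
- by move=> e; case: (f2N v vX (negbT vY)); rewrite -e f1Y.
- by move=> e; case: (f2N u uX (negbT uY)); rewrite e f1Y.
- by apply: f2i; rewrite inE ?uY ?vY ?uX ?vX.
Qed.

Lemma marriage_cond_tight X Y L :
    marriage_cond X L -> Y \subset X -> #|\bigcup_(v in Y) L v| <= #|Y| ->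
  marriage_cond (X :\: Y) (fun v => L v :\: \bigcup_(v in Y) L v).
Proof.
move=> hX sYX tightY Z sZ; rewrite bigcup_setDl.
set NY := \bigcup_(v in Y) L v; set NZ := \bigcup_(v in Z) L v.
have dZY : Z :&: Y = set0.
  apply/setP=> v; rewrite !inE; apply/negP=> /andP [vZ vY].
  by have := subsetP sZ v vZ; rewrite inE vY.
have := hX (Z :|: Y); rewrite subUset sYX (subset_trans sZ (subsetDl _ _)).
rewrite bigcup_setU -/NY -/NZ => /(_ isT).
rewrite cardsU dZY cards0 cardsU cardsD.
have := subset_leq_card (subsetIl NZ NY); have := subset_leq_card (subsetIr NZ NY).
move: tightY; rewrite -/NY; lia.
Qed.

Lemma marriage_cond_surplus X L x c :
    (forall Y, Y \subset X -> Y != set0 -> Y != X -> #|Y| < #|\bigcup_(v in Y) L v|) ->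
    x \in X ->
  marriage_cond (X :\ x) (fun v => L v :\ c).
Proof.
move=> hX xX Z sZ; rewrite bigcup_setDl.
have [->|[z zZ]] := set_0Vmem Z; first by rewrite cards0.
have sZX : Z \subset X by apply: subset_trans sZ (subsetDl _ _).
have nZX : Z != X by apply: contraTneq sZ => ->; apply/subsetPn; exists x; rewrite ?inE ?eqxx.
have := hX Z sZX; rewrite nZX; have -> : Z != set0 by apply/set0Pn; exists z.
move=> /(_ isT isT); rewrite (cardsD1 c (\bigcup_(v in Z) L v)).
by case: (c \in _) => /=; lia.
Qed.

Lemma hall_marriage (c0 : C) X L : marriage_cond X L -> exists f, distinct_reps X L f.
Proof.
have [m ltXm] := ubnP #|X|; elim: m X L ltXm => // m IH X L ltXm hX.
case: (boolP [exists Y : {set T}, [&& Y \subset X, Y != set0, Y != X &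
                #|\bigcup_(v in Y) L v| <= #|Y|]]).
  case/existsP=> Y /and4P [sYX nY0 nYX tightY].
  have ltYX : #|Y| < #|X| by apply: proper_card; rewrite properEneq nYX.
  have [f1 f1R] : exists f, distinct_reps Y L f.
    apply: IH => [|Z sZY]; first lia.
    by apply: hX; apply: subset_trans sZY sYX.
  have [f2 f2R] : exists f, distinct_reps (X :\: Y) (fun v => L v :\: \bigcup_(v in Y) L v) f.
    apply: IH; last exact: marriage_cond_tight.
    by move: nY0 ltXm; rewrite cardsD (setIidPr sYX) -card_gt0; lia.
  exists (fun v => if v \in Y then f1 v else f2 v); apply: distinct_reps_glue (f1R) _ f2R.
  by apply/subsetP=> _ /imsetP [v vY ->]; apply/bigcupP; exists v => //; apply: f1R.1.
rewrite negb_exists => /forallP noTight.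
have [X0|[x xX]] := set_0Vmem X.
  by exists (fun _ => c0); split=> [v|u v]; rewrite X0 inE.
have [c cLx] : exists c, c \in L x.
  by apply/set0Pn; rewrite -card_gt0; have := hX [set x]; rewrite sub1set xX big_set1 cards1; apply.
have [f2 f2R] : exists f, distinct_reps (X :\ x) (fun v => L v :\ c) f.
  apply: IH; first by move: ltXm; rewrite (cardsD1 x X) xX.
  apply: marriage_cond_surplus xX => Y sYX nY0 nYX.
  by have := noTight Y; rewrite sYX nY0 nYX /= -ltnNge.
exists (fun v => if v \in [set x] then c else f2 v); apply: distinct_reps_glue f2R.
- by split=> [v|u v]; rewrite ?inE => /eqP -> //; move=> /eqP ->.
- by apply/subsetP=> _ /imsetP [v _ ->]; rewrite inE.
Qed.

End HallMarriage.

Section PairColoring.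
Variables (I C : finType).
Implicit Types (P : {set I}) (L : I * bool -> {set C}) (f : I * bool -> C).

Definition colors_parts P L f :=
  (forall v, v.1 \in P -> f v \in L v) /\
  (forall u v, u.1 \in P -> v.1 \in P -> u.1 != v.1 -> f u != f v).

Lemma colors_parts_extend P L f i c :
    i \in P -> c \in L (i, false) -> c \in L (i, true) ->
    colors_parts (P :\ i) (fun v => L v :\ c) f ->
  colors_parts P L (fun v => if v.1 == i then c else f v).
Proof.
move=> iP cLf cLt [fL fp].
have fD v : v.1 \in P -> v.1 != i -> f v != c /\ f v \in L v.
  by move=> vP vi; apply/setD1P/fL; rewrite !inE vi.
split=> [[j b] /= jP | u v uP vP /= uv].
  by case: eqP => [->|/eqP ji]; [case: b | case: (fD (j, b) jP ji)].
case: (u.1 =P i) => [ui|/eqP ui]; case: (v.1 =P i) => [vi|/eqP vi].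
- by move: uv; rewrite ui vi eqxx.
- by case: (fD v vP vi); rewrite eq_sym.
- by case: (fD u uP ui).
- by apply: fp; rewrite // !inE ?ui ?vi.
Qed.

Lemma marriage_cond_disjoint_parts P L :
    (forall i, i \in P -> [disjoint L (i, false) & L (i, true)]) ->
    (forall v, v.1 \in P -> #|P| <= #|L v|) ->
  marriage_cond (setX P [set: bool]) L.
Proof.
move=> hD hL Y sYX.
have inP v : v \in Y -> v.1 \in P by move=> /(subsetP sYX); rewrite inE => /andP [].
have leLY v : v \in Y -> L v \subset \bigcup_(w in Y) L w by move=> vY; apply: bigcup_sup.
case: (boolP [exists u in Y, exists v in Y, (u.1 == v.1) && (u != v)]).
  case/exists_inP=> u uY /exists_inP [v vY /andP [/eqP uv nuv]].
  have dLuv : [disjoint L u & L v].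
    move: uv nuv (inP u uY); case: u uY => [i b] _; case: v vY => [j b'] _ /= <- nbb' iP.
    case: b b' nbb' => [] []; rewrite ?eqxx // => _.
      by rewrite disjoint_sym; apply: hD.
    exact: hD.
  have := subset_leq_card sYX.
  have /subset_leq_card : L u :|: L v \subset \bigcup_(w in Y) L w by rewrite subUset !leLY.
  rewrite cardsU (disjoint_setI0 dLuv) cards0 cardsX cardsT card_bool.
  by have := hL u (inP u uY); have := hL v (inP v vY); lia.
rewrite negb_exists_in => /forall_inP noPair.
have [->|[y yY]] := set_0Vmem Y; first by rewrite cards0.
have fstY : #|Y| = #|[set v.1 | v in Y]|.
  rewrite card_in_imset // => u v uY vY uv; apply/eqP; apply: contraT => nuv.
  by have /exists_inPn /(_ v vY) := noPair u uY; rewrite uv eqxx nuv.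
have fstP : [set v.1 | v in Y] \subset P by apply/subsetP=> _ /imsetP [v vY ->]; apply: inP.
rewrite fstY (leq_trans (subset_leq_card fstP)) // (leq_trans (hL y (inP y yY))) //.
exact/subset_leq_card/leLY.
Qed.

Lemma colors_parts_disjoint (c0 : C) P L :
    (forall i, i \in P -> [disjoint L (i, false) & L (i, true)]) ->
    (forall v, v.1 \in P -> #|P| <= #|L v|) ->
  exists f, colors_parts P L f.
Proof.
move=> hD hL; have [f [fL fi]] := hall_marriage c0 (marriage_cond_disjoint_parts hD hL).
exists f; split=> [v vP | u v uP vP]; first by apply: fL; rewrite !inE vP.
by apply: contraNneq => /fi -> //; rewrite !inE ?uP ?vP.
Qed.

Lemma colors_parts_choosable (c0 : C) P L :
  (forall v, v.1 \in P -> #|P| <= #|L v|) -> exists f, colors_parts P L f.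
Proof.
have [m ltPm] := ubnP #|P|; elim: m P L ltPm => // m IH P L ltPm hL.
case: (boolP [exists i in P, ~~ [disjoint L (i, false) & L (i, true)]]); last first.
  by rewrite negb_exists_in => /forall_inP hD; apply: colors_parts_disjoint => // i /hD /negPn.
case/exists_inP=> i iP; rewrite -setI_eq0 => /set0Pn [c /setIP [cLf cLt]].
have [f fcol] : exists f, colors_parts (P :\ i) (fun v => L v :\ c) f.
  apply: IH => [|v]; first by move: ltPm; rewrite (cardsD1 i P) iP.
  rewrite inE => /andP [_ vP]; move: (hL v vP).
  by rewrite (cardsD1 i P) (cardsD1 c (L v)) iP; case: (c \in L v) => /=; lia.
by exists (fun v => if v.1 == i then c else f v); apply: colors_parts_extend.
Qed.

End PairColoring.

Lemma leq_card_alpha_color (V C : finType) (e : rel V) (L : V -> {set C})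
    (W : {set V}) (E : rel V) (c : C) (S : {set V}) :
    is_subgraph e W E -> S \subset restrict_color L W c ->
    {in S &, forall u v, ~~ e u v} ->
  #|S| <= alpha_color L W E c.
Proof.
move=> [_ sEe] sSW indS; apply: leq_bigmax_cond; apply/andP; split=> //.
apply/forall_inP=> u uS; apply/forall_inP=> v vS /=.
by apply/negP=> /and3P [_ _ /sEe /and3P [_ _]]; apply/negP/indS.
Qed.

Lemma cards_bool (P : pred bool) : #|[set b | P b]| = P false + P true.
Proof. by rewrite -sum1dep_card big_mkcond big_bool addnC; case: (P false); case: (P true). Qed.

Lemma card_fibres_fst (I J : finType) (W : {set I * J}) :
  #|W| = \sum_i #|[set j | (i, j) \in W]|.
Proof.
under eq_bigr do rewrite -sum1dep_card.
by rewrite pair_big_dep -sum1_card; apply: eq_bigl => -[i j].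
Qed.

Lemma part_leq_alpha_color k (C : finType) (L : K2_vertex k -> {set C})
    (W : {set K2_vertex k}) (E : rel (K2_vertex k)) (c : C) (i : 'I_k) :
    is_subgraph (K2_adj k) W E ->
  #|[set b | ((i, b) \in W) && (c \in L (i, b))]| <= alpha_color L W E c.
Proof.
move=> sub; have pair_inj : injective (pair i : bool -> K2_vertex k) by move=> b b' [].
rewrite -(card_imset _ pair_inj).
apply: leq_card_alpha_color sub _ _.
  by apply/subsetP=> _ /imsetP [b + ->]; rewrite !inE.
by move=> _ _ /imsetP [b _ ->] /imsetP [b' _ ->]; rewrite /K2_adj eqxx.
Qed.

Section CriticalLists.
Variable n : nat.

(* Part 0 is special and colours are a_i = inl i, x_b = inr b.  A vertex (i, false)
   with i <> 0 gets {a_0..a_n}, a vertex (i, true) with i <> 0 gets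
   {a_1..a_n, x_false, x_true}, and (0, b) gets {a_0..a_n, x_b}.  In a colouring
   the n + 1 vertices (i, false), i <> 0, exhaust a_0..a_n, forcing f (0, b) = x_b,
   and then the partner of the vertex coloured a_0 has no colour left. *)

Definition critical_list (v : K2_vertex n.+2) : {set 'I_n.+1 + bool} :=
  [set c | match c with
           | inl i => (v.1 == ord0) || ~~ v.2 || (i != ord0)
           | inr b => if v.1 == ord0 then b == v.2 else v.2
           end].

Lemma critical_list_size v : n.+1 <= #|critical_list v|.
Proof.
pose h i : 'I_n.+1 + bool := if inl i \in critical_list v then inl i else inr true.
have hL i : h i \in critical_list v.
  rewrite /h; case: ifP => // /negbT; rewrite !inE.
  by case: (v.1 == ord0); case: (v.2).
have h_inj : injective h.
  move=> i j; rewrite /h; case: ifP => Li; case: ifP => Lj //; first by case.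
  by move: Li Lj; rewrite !inE => /negbT/norP [_ /negPn/eqP ->] /negbT/norP [_ /negPn/eqP ->].
apply: (@leq_trans #|h @: [set: 'I_n.+1]|); first by rewrite card_imset // cardsT card_ord.
by apply/subset_leq_card/subsetP=> _ /imsetP [i _ ->].
Qed.

Lemma critical_list_not_colorable : ~ L_colorable (K2_adj n.+2) critical_list.
Proof.
case=> f [fL fp]; have adj u v : u.1 != v.1 -> f u != f v := fp u v.
pose g i : 'I_n.+1 := if f (lift ord0 i, false) is inl c then c else ord0.
have fA i : f (lift ord0 i, false) = inl (g i).
  by have := fL (lift ord0 i, false); rewrite inE /= /g; case: (f _).
have g_inj : injective g.
  move=> i j gij; apply: lift_inj; apply/eqP; apply: contraT => nij.
  by have := adj (lift ord0 i, false) (lift ord0 j, false) nij; rewrite !fA gij eqxx.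
have [ginv gK ginvK] := injF_bij g_inj.
have fA_other c : ~~ [exists v, (v.1 != lift ord0 (ginv c)) && (f v == inl c)].
  apply/existsP=> -[v /andP [nv /eqP fv]].
  by have := adj v (lift ord0 (ginv c), false) nv; rewrite fA ginvK fv eqxx.
have f0 b : f (ord0, b) = inr b.
  have := fL (ord0, b); rewrite inE /=; case fb: (f _) => [c|b'] //; last by move/eqP->.
  by case/existsP: (fA_other c); exists (ord0, b); rewrite /= fb eqxx.
pose w : K2_vertex n.+2 := (lift ord0 (ginv ord0), true).
have := fL w; rewrite inE /=; case fw: (f w) => [c|b] /= Lw.
  case/existsP: (fA_other c); exists w; rewrite fw eqxx andbT /=.
  apply: contra Lw => /eqP /lift_inj /(congr1 g); rewrite !ginvK => ->; exact: eqxx.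
by have := adj w (ord0, b); rewrite fw f0 eqxx => /(_ isT).
Qed.

Lemma critical_list_hall : hall_condition (K2_adj n.+2) critical_list.
Proof.
move=> W E sub.
set al := alpha_color critical_list W E.
have bound c i : #|[set b | ((i, b) \in W) && (c \in critical_list (i, b))]| <= al c.
  exact: part_leq_alpha_color.
rewrite card_fibres_fst big_ord_recl big_ord_recl big_sumType big_ord_recl big_bool /=.
(* a_j, j <> 0, lies in every list and pays for part j + 1; a_0, x_false and
   x_true pay for parts 0 and 1. *)
have middle : \sum_(j < n) #|[set b | (lift ord0 (lift ord0 j), b) \in W]|
              <= \sum_(j < n) al (inl (lift ord0 j)).
  apply: leq_sum => j _; apply: leq_trans (bound _ (lift ord0 (lift ord0 j))).
  by rewrite !cards_bool !inE /= !andbT.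
have := bound (inl ord0) ord0; have := bound (inl ord0) (lift ord0 ord0).
have := bound (inr false) ord0; have := bound (inr false) (lift ord0 ord0).
have := bound (inr true) ord0; have := bound (inr true) (lift ord0 ord0).
rewrite !cards_bool !inE /= !eqxx /=.
move: middle; set s := \sum_(j < n) _; set s' := \sum_(j < n) _.
case: ((ord0, false) \in W); case: ((ord0, true) \in W);
  case: ((lift ord0 ord0, false) \in W); case: ((lift ord0 ord0, true) \in W) => /=; lia.
Qed.

End CriticalLists.

Lemma hall_property_mono (V : finType) (e : rel V) j k :
  j <= k -> hall_property e j -> hall_property e k.
Proof. by move=> le_jk hj C L hall hL; apply: hj hall _ => v; apply: leq_trans le_jk (hL v). Qed.

Lemma K2_choosable k (C : finType) (L : K2_vertex k -> {set C}) :
  0 < k -> (forall v, k <= #|L v|) -> L_colorable (K2_adj k) L.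
Proof.
move=> k_gt0 hL; have [c0 _] : exists c, c \in L (Ordinal k_gt0, false).
  by apply/set0Pn; rewrite -card_gt0 (leq_trans k_gt0).
have [f [fL fp]] : exists f, colors_parts [set: 'I_k] L f.
  by apply: (colors_parts_choosable (I := 'I_k) c0) => v _; rewrite cardsT card_ord.
by exists f; split=> [v | u v]; [apply: fL | apply: fp]; rewrite ?inE.
Qed.

Lemma K2_not_hall_property n : ~ hall_property (K2_adj n.+2) n.+1.
Proof.
move=> hall; apply: (@critical_list_not_colorable n).
exact: hall _ _ (@critical_list_hall n) (@critical_list_size n).
Qed.

Theorem theorem3 (k : nat) : 2 <= k -> hall_number_is (K2_adj k) k.
Proof.
case: k => [|[|n]] // _; split=> //; split.
  by move=> C L _; apply: K2_choosable.
move=> j _ hj; rewrite leqNgt; apply/negP => lt_j.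
exact: K2_not_hall_property (hall_property_mono (k := n.+1) lt_j hj).
Qed.
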